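(* Let $G=(V,E)$ be a temporal network, let $\pi$ be an ordering of $V$, and let $\delta\ge 0$. Let $e=(v,u,t)\in E$ be a temporal edge with $\pi(u)<\pi(v)$, and let $w\in N^{+}_{\pi}(u)$ be a vertex adjacent to $v$ in $G_S$. Put $L_2=E_{v,w}$ and $L_3=E_{u,w}$. Let $L_{12}[e]$ be the first edge of $L_2$ (in sorted order) whose timestamp is at least $t(e)$, and let $L_{13}[e]$ be the last edge of $L_3$ whose timestamp is at most $t(e)+\delta$. Then $e$ forms at least one $\delta$-temporal triangle with $w$ if and only if $L_{12}[e]$ and $L_{13}[e]$ exist and $$t(e)\le t(L_{12}[e])\le t(L_{13}[e])\le t(e)+\delta.$$
   Context: A temporal network $G=(V,E)$ is a finite multiset of temporal edges $(x,y,t)$ with $x\neq y\in V$ and timestamp $t=t(e)\in\mathbb{R}$; the edge goes from $x$ to $y$, and parallel edges (in both directions) are allowed. For distinct $x,y\in V$, $E_{x,y}$ denotes the list of temporal edges from $x$ to $y$, sorted by increasing timestamp. $G_S$ is the simple undirected graph on $V$ with $\{x,y\}$ an edge iff there is at least one temporal edge between $x$ and $y$; $N(x)$ is the neighbourhood of $x$ in $G_S$. For an ordering $\pi$ of $V$, $N^{+}_{\pi}(x)=\{y\in N(x):\pi(x)<\pi(y)\}$. For $\delta\ge 0$, a temporal edge $e=(a,b,t)$ forms a $\delta$-temporal triangle with a vertex $c$ if there exist temporal edges $(a,c,t_2)$ and $(b,c,t_3)$ in $E$ with $t\le t_2\le t_3\le t+\delta$. *)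

From HB Require Import structures.
From mathcomp Require Import all_boot all_order all_algebra.
From mathcomp Require Import reals.
Set Implicit Arguments. Unset Strict Implicit. Unset Printing Implicit Defensive.
Import Order.TTheory GRing.Theory Num.Theory.
Local Open Scope ring_scope.

Definition tedge (V : finType) (R : realType) := (V * V * R)%type.
Definition src {V : finType} {R : realType} (f : tedge V R) : V := f.1.1.
Definition dst {V : finType} {R : realType} (f : tedge V R) : V := f.1.2.
Definition ts  {V : finType} {R : realType} (f : tedge V R) : R := f.2.

(* A temporal network is a finite multiset of temporal edges, represented as a
   list E (multiplicities = repetitions); well-formed if no self loops. *)
Definition wf_tnet {V : finType} {R : realType} (E : seq (tedge V R)) : Prop :=
  forall f, f \in E -> src f != dst f.

Definition Exy {V : finType} {R : realType} (E : seq (tedge V R)) (x y : V)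
  : seq (tedge V R) :=
  sort (fun a b : tedge V R => ts a <= ts b)
       [seq f <- E | (src f == x) && (dst f == y)].

Definition adjS {V : finType} {R : realType} (E : seq (tedge V R)) (x y : V) : bool :=
  has (fun f => ((src f == x) && (dst f == y)) || ((src f == y) && (dst f == x))) E.

Definition Nplus {V : finType} {R : realType} (E : seq (tedge V R)) (pi : V -> nat)
  (x y : V) : bool := adjS E x y && (pi x < pi y)%N.

Definition forms_triangle {V : finType} {R : realType} (E : seq (tedge V R))
  (delta : R) (e : tedge V R) (c : V) : Prop :=
  exists t2 t3 : R,
    (src e, c, t2) \in E /\ (dst e, c, t3) \in E /\
    ts e <= t2 /\ t2 <= t3 /\ t3 <= ts e + delta.

Definition L12 {V : finType} {R : realType} (L2 : seq (tedge V R)) (e : tedge V R)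
  : option (tedge V R) := ohead [seq f <- L2 | ts e <= ts f].

Definition L13 {V : finType} {R : realType} (L3 : seq (tedge V R)) (delta : R)
  (e : tedge V R) : option (tedge V R) :=
  ohead (rev [seq f <- L3 | ts f <= ts e + delta]).

From mathcomp Require Import all_boot all_order all_algebra.
From mathcomp Require Import reals.
Import Order.TTheory GRing.Theory Num.Theory.
Local Open Scope ring_scope.

(* Let e = (a,b,t). Since E_{x,w} is sorted by timestamp, a triangle formed
   by e with edges (a,w,t2) and (b,w,t3) can always be traded for the earliest
   admissible edge of E_{a,w} and the latest admissible edge of E_{b,w}: this
   only moves t2 down and t3 up, staying inside [t, t + delta]. Conversely
   L12[e] and L13[e] are themselves edges from a and b to w, so they witness a
   triangle. *)

Lemma ohead_filter_mem {T : eqType} {P : pred T} {s : seq T} {h : T} :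
  ohead [seq y <- s | P y] = Some h -> h \in s /\ P h.
Proof.
have : forall y, y \in [seq y <- s | P y] -> y \in s /\ P y.
  by move=> y; rewrite mem_filter => /andP[].
by case: [seq y <- s | P y] => //= y l memP [<-]; apply: memP; rewrite mem_head.
Qed.

Lemma ohead_filter_sorted_min {T : eqType} {r : rel T} (P : pred T) {s : seq T} {x : T} :
  reflexive r -> transitive r -> sorted r s -> x \in s -> P x ->
  exists2 h, ohead [seq y <- s | P y] = Some h & P h /\ r h x.
Proof.
move=> r_refl r_trans s_sorted xs Px.
have : sorted r [seq y <- s | P y] by exact: sorted_filter.
have : x \in [seq y <- s | P y] by rewrite mem_filter Px xs.
have : forall y, y \in [seq y <- s | P y] -> P y.
  by move=> y; rewrite mem_filter => /andP[].
case: [seq y <- s | P y] => //= h l memP x_in h_path.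
exists h => //; split; first by apply: memP; rewrite mem_head.
move: x_in; rewrite in_cons => /orP[/eqP-> // | xl].
by move/allP: (order_path_min r_trans h_path); apply.
Qed.

Section TemporalTriangles.

Variables (V : finType) (R : realType).
Implicit Types (E L : seq (tedge V R)) (e f : tedge V R).

Definition ts_le : rel (tedge V R) := fun f g => ts f <= ts g.

Lemma ts_le_refl : reflexive ts_le.
Proof. by move=> f; apply: lexx. Qed.

Lemma ts_le_trans : transitive ts_le.
Proof. by move=> g f h; exact: le_trans. Qed.

Lemma ts_ge_trans : transitive (fun f g => ts_le g f).
Proof. by move=> g f h fg gh; exact: ts_le_trans gh fg. Qed.

Lemma sorted_Exy E x y : sorted ts_le (Exy E x y).
Proof. by apply: sort_sorted => f g; exact: le_total. Qed.

Lemma mem_Exy E x y s : ((x, y, s) \in Exy E x y) = ((x, y, s) \in E).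
Proof. by rewrite mem_sort mem_filter /src /dst /= !eqxx. Qed.

Lemma Exy_endpoints {E x y f} : f \in Exy E x y -> f = (x, y, ts f).
Proof.
by case: f => [[a b] s]; rewrite mem_sort mem_filter /src /dst /= => /andP[/andP[/eqP-> /eqP->]].
Qed.

Lemma L12_spec {L e f} : L12 L e = Some f -> f \in L /\ ts e <= ts f.
Proof. exact: ohead_filter_mem. Qed.

Lemma L13_spec {L delta e f} :
  L13 L delta e = Some f -> f \in L /\ ts f <= ts e + delta.
Proof. by rewrite /L13 -filter_rev => /ohead_filter_mem; rewrite mem_rev. Qed.

Lemma L12_le {L e g} : sorted ts_le L -> g \in L -> ts e <= ts g ->
  exists2 f, L12 L e = Some f & ts e <= ts f <= ts g.
Proof.
move=> L_sorted gL ge.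
have [f f_head [ef fg]] := ohead_filter_sorted_min (fun f => ts e <= ts f)
    ts_le_refl ts_le_trans L_sorted gL ge.
by exists f => //; apply/andP.
Qed.

Lemma L13_ge {L delta e g} : sorted ts_le L -> g \in L -> ts g <= ts e + delta ->
  exists2 f, L13 L delta e = Some f & ts g <= ts f <= ts e + delta.
Proof.
move=> L_sorted gL gd.
have revL_sorted : sorted (fun f g => ts_le g f) (rev L) by rewrite rev_sorted.
have g_revL : g \in rev L by rewrite mem_rev.
have [f f_head [fd gf]] :=
  ohead_filter_sorted_min (fun f => ts f <= ts e + delta)
    (r := fun f g => ts_le g f) ts_le_refl ts_ge_trans revL_sorted g_revL gd.
by exists f; [rewrite /L13 -filter_rev | apply/andP].
Qed.

Lemma forms_triangle_iff_L12_L13 E delta e c :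
  forms_triangle E delta e c <->
  exists f12 f13 : tedge V R,
    L12 (Exy E (src e) c) e = Some f12 /\
    L13 (Exy E (dst e) c) delta e = Some f13 /\
    ts e <= ts f12 /\ ts f12 <= ts f13 /\ ts f13 <= ts e + delta.
Proof.
split.
- case=> t2 [t3 [in2 [in3 [et2 [t23 t3d]]]]].
  have in2L : (src e, c, t2) \in Exy E (src e) c by rewrite mem_Exy.
  have in3L : (dst e, c, t3) \in Exy E (dst e) c by rewrite mem_Exy.
  have [f12 H12 /andP[ef12 f12t2]] := L12_le (sorted_Exy _ _ _) in2L et2.
  have [f13 H13 /andP[t3f13 f13d]] := L13_ge (sorted_Exy _ _ _) in3L t3d.
  exists f12, f13; do 3 split=> //; split=> //.
  by rewrite (le_trans f12t2) // (le_trans t23).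
- case=> f12 [f13 [H12 [H13 [_ [f1213 _]]]]].
  have [in12 ef12] := L12_spec H12; have [in13 f13d] := L13_spec H13.
  have in12E : (src e, c, ts f12) \in E by rewrite -mem_Exy -(Exy_endpoints in12).
  have in13E : (dst e, c, ts f13) \in E by rewrite -mem_Exy -(Exy_endpoints in13).
  by exists (ts f12), (ts f13).
Qed.

End TemporalTriangles.

Theorem theorem3p2 (V : finType) (R : realType) (E : seq (tedge V R))
  (pi : V -> nat) (delta : R) (v u w : V) (t : R) :
  wf_tnet E -> injective pi -> 0 <= delta ->
  (v, u, t) \in E -> (pi u < pi v)%N ->
  Nplus E pi u w -> adjS E v w ->
  forms_triangle E delta (v, u, t) w <->
  exists f12 f13 : tedge V R,
    L12 (Exy E v w) (v, u, t) = Some f12 /\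
    L13 (Exy E u w) delta (v, u, t) = Some f13 /\
    t <= ts f12 /\ ts f12 <= ts f13 /\ ts f13 <= t + delta.
Proof. by move=> *; exact: forms_triangle_iff_L12_L13. Qed.
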